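(* Let $K$ be a parallelogram and $k\ge1$ an integer. Let $V(K)=\mathcal P_k(K)$, $\bm W(K)=[\mathcal P_k(K)]^2$, and $\bm M(\partial K)=\{\bm\mu:\bm\mu|_F=\bm n\times p_k\text{ for some }p_k\in\mathcal P_k(F),\text{ for each edge }F\subset\partial K\}$. Then $I_M(V(K)\times\bm W(K))=2$.
   Context: $\mathcal P_k$ denotes polynomials of total degree at most $k$. Conventions in 2D: $\nabla\times\bm v=-\partial_yv_1+\partial_xv_2$, $\nabla\times p=(\partial_yp,-\partial_xp)^T$, $\bm n\times\bm v=-n_2v_1+n_1v_2$, $\bm n\times p=(n_2p,-n_1p)^T$, $\bm n\times\bm w\times\bm n:=\bm w-(\bm w\cdot\bm n)\bm n$, $\bm n$ the unit outward normal. $I_M(V(K)\times\bm W(K)):=\dim\bm M(\partial K)-\dim\{\bm n\times v|_{\partial K}:v\in V(K),\nabla\times v=\bm0\}-\dim\{\bm n\times\bm w\times\bm n|_{\partial K}:\bm w\in\bm W(K),\nabla\times\bm w=0\}$. *)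

From HB Require Import structures.
From mathcomp Require Import all_boot all_order all_algebra.
From mathcomp Require Import mpoly.

Set Implicit Arguments.
Unset Strict Implicit.
Unset Printing Implicit Defensive.

Import Order.TTheory GRing.Theory Num.Theory.
Local Open Scope ring_scope.

Section Defs.
Variable R : rcfType.

Definition pt := (R * R)%type.

Definition dotp (u v : pt) : R := u.1 * v.1 + u.2 * v.2.
Definition det2 (u v : pt) : R := u.1 * v.2 - u.2 * v.1.

(** Bivariate polynomials: {mpoly R[2]}, variable 0 = x, variable 1 = y.
    P_k = polynomials of total degree <= k, i.e. msize p <= k.+1. *)
Definition Pk (k : nat) (p : {mpoly R[2]}) : Prop := (msize p <= k.+1)%N.

Definition coords (x : pt) : 'I_2 -> R := fun j => if val j == 0%N then x.1 else x.2.

Definition ev (p : {mpoly R[2]}) (x : pt) : R := meval (coords x) p.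

Definition dx (p : {mpoly R[2]}) : {mpoly R[2]} := mderiv (0 : 'I_2) p.
Definition dy (p : {mpoly R[2]}) : {mpoly R[2]} := mderiv (1 : 'I_2) p.

(** 2D curls (conventions of the paper):
    curl of a scalar p : (d_y p, - d_x p);
    curl of a vector (w1,w2) : - d_y w1 + d_x w2. *)
Definition curl_s_zero (p : {mpoly R[2]}) : Prop := dy p = 0 /\ - dx p = 0.
Definition curl_v (w1 w2 : {mpoly R[2]}) : {mpoly R[2]} := - dy w1 + dx w2.

Definition ncross_s (n : pt) (p : R) : pt := (n.2 * p, - (n.1 * p)).
(** n x w x n := w - (w.n) n *)
Definition ntan (n w : pt) : pt :=
  (w.1 - dotp w n * n.1, w.2 - dotp w n * n.2).

(** The parallelogram K with vertices a, a+e1, a+e1+e2, a+e2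
    (det2 e1 e2 <> 0).  Its edges, numbered 0..3, are traversed in this
    vertex order: edge i = { P i + t * d i : 0 <= t <= 1 }. *)
Definition addp (u v : pt) : pt := (u.1 + v.1, u.2 + v.2).
Definition scalep (t : R) (u : pt) : pt := (t * u.1, t * u.2).
Definition oppp (u : pt) : pt := (- u.1, - u.2).

Definition edge_start (a e1 e2 : pt) (i : 'I_4) : pt :=
  match val i with
  | 0%N => a
  | 1%N => addp a e1
  | 2%N => addp (addp a e1) e2
  | _ => addp a e2
  end.

Definition edge_dir (e1 e2 : pt) (i : 'I_4) : pt :=
  match val i with
  | 0%N => e1
  | 1%N => e2
  | 2%N => oppp e1
  | _ => oppp e2
  end.

Definition on_edge (a e1 e2 : pt) (i : 'I_4) (x : pt) : Prop :=
  exists t : R, 0 <= t <= 1 /\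
    x = addp (edge_start a e1 e2 i) (scalep t (edge_dir e1 e2 i)).

(** Unit outward normal on edge i: the edge direction d rotated by -90
    degrees, normalised, with the sign of det2 e1 e2 (which is the
    orientation of the vertex ordering). *)
Definition normal (e1 e2 : pt) (i : 'I_4) : pt :=
  let d := edge_dir e1 e2 i in
  scalep (Num.sg (det2 e1 e2) / Num.sqrt (dotp d d)) (d.2, - d.1).

(** Functions on dK: since the normal is edge-wise defined (and a trace on
    dK is edge-wise), a function on dK is represented as a function on
    'I_4 * pt, where only the values at (i, x) with x on edge i matter. *)
Definition bdom (a e1 e2 : pt) : ('I_4 * pt) -> Prop :=
  fun ix => on_edge a e1 e2 ix.1 ix.2.

(** Finite dimension of a space S of V-valued functions on T, where functions
    are identified when they agree on the domain D:
    S has dimension n iff there is a basis f_0..f_{n-1} of elements of S,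
    linearly independent on D and spanning S (modulo equality on D). *)
Definition has_dim (T : Type) (D : T -> Prop) (S : (T -> pt) -> Prop) (n : nat) : Prop :=
  exists f : 'I_n -> T -> pt,
    (forall i, S (f i)) /\
    (forall c : 'I_n -> R,
        (forall x, D x -> \sum_(i < n) scalep (c i) (f i x) = (0, 0)) ->
        forall i, c i = 0) /\
    (forall g, S g -> exists c : 'I_n -> R,
        forall x, D x -> g x = \sum_(i < n) scalep (c i) (f i x)).

Definition Mspace (k : nat) (a e1 e2 : pt) : ('I_4 * pt -> pt) -> Prop :=
  fun mu => forall i : 'I_4, exists p, Pk k p /\
     forall x, on_edge a e1 e2 i x -> mu (i, x) = ncross_s (normal e1 e2 i) (ev p x).

Definition Vtrace (k : nat) (a e1 e2 : pt) : ('I_4 * pt -> pt) -> Prop :=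
  fun g => exists v, Pk k v /\ curl_s_zero v /\
     forall i x, on_edge a e1 e2 i x -> g (i, x) = ncross_s (normal e1 e2 i) (ev v x).

Definition Wtrace (k : nat) (a e1 e2 : pt) : ('I_4 * pt -> pt) -> Prop :=
  fun g => exists w1 w2, Pk k w1 /\ Pk k w2 /\ curl_v w1 w2 = 0 /\
     forall i x, on_edge a e1 e2 i x ->
       g (i, x) = ntan (normal e1 e2 i) (ev w1 x, ev w2 x).

End Defs.

(* Pull the parallelogram back to the unit square through the affine map
   (s, u) |-> a + s e1 + u e2 and run along each edge with a parameter t in
   [0, 1].  On edge i, every element of the three trace spaces is then a
   polynomial in t times one fixed nonzero vector, so each dimension is that of
   a space of 4-tuples of univariate polynomials.
   - M: any polynomial of degree <= k on each edge, hence 4 (k + 1).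
   - V: a curl-free v in P_k is constant, hence 1.
   - W: a curl-free w in [P_k]^2 is the gradient of some phi in P_(k+1), and
     n x w x n is d/dt of phi along the edge times the edge direction.  Writing
     phi in the coordinates (s, u), these edge derivatives are spanned by those
     of the monomials s^p u^q with 1 <= p + q <= k + 1 and min(p, q) <= 1
     (since s^p u^q agrees on the boundary of the square with
     s^p u + s u^q - s u), and those 4k + 1 tuples are independent.
   Hence 4 (k + 1) - 1 - (4 k + 1) = 2. *)

From HB Require Import structures.
From mathcomp Require Import all_boot all_order all_algebra.
From mathcomp Require Import mpoly.
From mathcomp Require Import ring lra zify.
Import Order.TTheory GRing.Theory Num.Theory.

Set Implicit Arguments.
Unset Strict Implicit.
Unset Printing Implicit Defensive.

Local Open Scope ring_scope.

Section UnitInterval.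
Variable R : numFieldType.

Lemma poly_eq0_on01 (p : {poly R}) : (forall t, 0 <= t <= 1 -> p.[t] = 0) -> p = 0.
Proof.
move=> p01; apply/eqP; apply: contraT => p_neq0.
pose rs := [seq (i.+1%:R)^-1 : R | i <- iota 0 (size p)].
have := max_poly_roots p_neq0 (rs := rs); rewrite size_map size_iota ltnn; apply.
- apply/allP => _ /mapP [i _ ->]; apply/rootP/p01.
  by rewrite invr_ge0 ler0n /= invf_le1 ?ltr0Sn // ler1n.
- rewrite map_inj_uniq ?iota_uniq // => i j /invr_inj /eqP.
  by rewrite eqr_nat eqSS => /eqP.
Qed.

Lemma poly_eq_on01 (p q : {poly R}) :
  (forall t, 0 <= t <= 1 -> p.[t] = q.[t]) -> p = q.
Proof.
move=> pq01; apply/eqP; rewrite -subr_eq0; apply/eqP/poly_eq0_on01 => t t01.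
by rewrite hornerD hornerN pq01 // subrr.
Qed.

End UnitInterval.

Lemma mcoeff_derivB (R : nzRingType) n (i : 'I_n) (p : {mpoly R[n]}) (m : 'X_{1..n}) :
  (0 < m i)%N -> p^`M(i)@_(m - U_(i)) = p@_m *+ m i.
Proof.
move=> m_i_gt0; rewrite mcoeff_deriv mnmBE mnm1E eqxx subn1 prednK // submK //.
by rewrite lep1mP -lt0n.
Qed.

Lemma mderiv_eq0_const (R : numDomainType) (n : nat) (p : {mpoly R[n]}) :
  (forall i, p^`M(i) = 0) -> p = (p@_0)%:MP.
Proof.
move=> dp0; apply/mpolyP => m; rewrite mcoeffC.
have [->|m_neq0] := eqVneq m 0%MM; first by rewrite mulr1.
rewrite mulr0.
have [i m_i_gt0] : exists i, (0 < m i)%N.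
  apply/existsP; apply: contraR m_neq0 => /existsPn m0.
  by apply/eqP/mnmP => i; rewrite mnm0E; move/negbTE: (m0 i); case: (m i).
have := mcoeff_derivB p m_i_gt0; rewrite dp0 mcoeff0 => /esym/eqP.
by rewrite mulrn_eq0 eqn0Ngt m_i_gt0 => /eqP.
Qed.

Lemma mmap1_2 (S : comNzRingType) (h : 'I_2 -> S) (m : 'X_{1..2}) :
  mmap1 h m = h 0 ^+ m 0 * h 1 ^+ m 1.
Proof.
by rewrite /mmap1 !big_ord_recl big_ord0 mulr1 (_ : lift ord0 ord0 = 1) //; apply: val_inj.
Qed.

Lemma mdeg2 (m : 'X_{1..2}) : mdeg m = addn (m 0) (m 1).
Proof.
by rewrite mdegE !big_ord_recl big_ord0 addn0 (_ : lift ord0 ord0 = 1) //; apply: val_inj.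
Qed.

Section TotalDegree.
Variable R : rcfType.
Implicit Types (p q : {mpoly R[2]}) (d : nat).

Lemma Pk_mono d d' p : (d <= d')%N -> Pk d p -> Pk d' p.
Proof. by move=> le_dd' /leq_trans; apply. Qed.

Lemma Pk_mcoeff d p m : Pk d p -> (d < mdeg m)%N -> p@_m = 0.
Proof.
move=> Pp lt_dm; apply/eqP; rewrite mcoeff_eq0; apply: msize_mdeg_ge.
exact: leq_trans Pp lt_dm.
Qed.

Lemma Pk0 d : Pk d (0 : {mpoly R[2]}).
Proof. by rewrite /Pk msize0. Qed.

Lemma PkC d c : Pk d (c%:MP : {mpoly R[2]}).
Proof. by rewrite /Pk msizeC; case: (c != 0). Qed.

Lemma PkD d p q : Pk d p -> Pk d q -> Pk d (p + q).
Proof.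
by move=> Pp Pq; apply: leq_trans (msizeD_le _ _) _; rewrite geq_max Pp.
Qed.

Lemma PkZ d c p : Pk d p -> Pk d (c *: p).
Proof. exact/leq_trans/msizeZ_le. Qed.

Lemma PkX d (i : 'I_2) : Pk d.+1 ('X_i : {mpoly R[2]}).
Proof. by rewrite /Pk msizeX mdeg1. Qed.

Lemma PkM d1 d2 p q : Pk d1 p -> Pk d2 q -> Pk (d1 + d2) (p * q).
Proof.
have [->|p_neq0] := eqVneq p 0; first by rewrite mul0r => *; apply: Pk0.
have [->|q_neq0] := eqVneq q 0; first by rewrite mulr0 => *; apply: Pk0.
rewrite /Pk msizeM //; case: (msize p) (msize q) => [|sp] [|sq] //=; lia.
Qed.

Lemma PkXn d j p : Pk d p -> Pk (d * j) (p ^+ j).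
Proof.
move=> Pp; elim: j => [|j IHj]; first by rewrite expr0 -mpolyC1; apply: PkC.
by rewrite exprS mulnS; apply: PkM.
Qed.

Lemma Pk_sum d (I : Type) (r : seq I) (P : pred I) (F : I -> {mpoly R[2]}) :
  (forall i, P i -> Pk d (F i)) -> Pk d (\sum_(i <- r | P i) F i).
Proof.
by move=> PF; elim/big_rec: _ => [|i p Pi Pp]; [exact: Pk0 | apply: PkD; first exact: PF].
Qed.

Lemma Pk_mderiv d (i : 'I_2) p : Pk d.+1 p -> Pk d p^`M(i).
Proof.
move=> Pp; rewrite /Pk msizeE; apply/bigmax_leqP_seq => m m_supp _.
rewrite ltnS leqNgt; apply: contraL m_supp => lt_dm.
rewrite -mcoeff_eq0 mcoeff_deriv (Pk_mcoeff Pp) ?mul0rn //.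
by rewrite mdegD mdeg1 addn1.
Qed.

End TotalDegree.

Section Poincare.
Variable R : rcfType.

Lemma divrnK (x : R) j : (0 < j)%N -> x / j%:R *+ j = x.
Proof. by move=> j_gt0; rewrite -mulr_natr divfK // pnatr_eq0 -lt0n. Qed.

Lemma Pk_curl_free_grad k (w1 w2 : {mpoly R[2]}) :
  Pk k w1 -> Pk k w2 -> dx w2 = dy w1 ->
  exists phi, [/\ Pk k.+1 phi, dx phi = w1 & dy phi = w2].
Proof.
rewrite /dx /dy; set x := (0 : 'I_2); set y := (1 : 'I_2) => Pw1 Pw2 curl_w.
(* phi integrates w1 in x, and w2 in y on the monomials free of x. *)
pose E (m : 'X_{1..2}) : R :=
  if (0 < m x)%N then w1@_(m - U_(x)) / (m x)%:R
  else if (0 < m y)%N then w2@_(m - U_(y)) / (m y)%:R else 0.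
pose phi := \sum_(m : 'X_{1..2 < k.+2}) E m *: 'X_[m].
have Pphi : Pk k.+1 phi.
  by apply: Pk_sum => m _; apply: PkZ; rewrite /Pk msizeX; apply: bmdeg.
exists phi; split => //; apply/mpolyP => m; rewrite mcoeff_deriv.
all: have [lt_mk|le_km] := ltnP (mdeg m) k.+1; last first.
  1,3: rewrite (Pk_mcoeff Pphi) ?mul0rn ?(Pk_mcoeff Pw1) ?(Pk_mcoeff Pw2) //.
  1,2: by rewrite mdegD mdeg1 addn1.
all: rewrite mcoeff_mpoly ?mdegD ?mdeg1 ?addn1 // /E mnmDE.
- by rewrite mnm1E eqxx addn1 /= addmK divrnK.
- rewrite !mnmDE !mnm1E /= addn0 addn1; case: ifP => [m_x_gt0|_].
    have := congr1 (mcoeff (m - U_(x))) curl_w.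
    rewrite mcoeff_derivB // mcoeff_deriv mnmBE mnm1E /= subn0.
    rewrite addmC addmBA ?lep1mP -?lt0n // [(U_(_) + m)%MM]addmC -mulrnAl => <-.
    by rewrite -[_ *+ m x]mulr_natr mulfK // pnatr_eq0 -lt0n.
  by rewrite addmK divrnK.
Qed.

Lemma curl_s_zero_const (v : {mpoly R[2]}) : curl_s_zero v -> v = (v@_0)%:MP.
Proof.
case=> dy_v /eqP; rewrite oppr_eq0 => /eqP dx_v.
apply: mderiv_eq0_const => -[[|[|//]] lt_j2].
  by have -> : Ordinal lt_j2 = 0 by exact: val_inj.
by have -> : Ordinal lt_j2 = 1 by exact: val_inj.
Qed.

End Poincare.

Section AffineMaps.
Variable R : rcfType.
Implicit Types (p q : {mpoly R[2]}) (x : pt R).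

Definition affine (c0 c1 c2 : R) : {mpoly R[2]} :=
  c0%:MP + c1 *: 'X_(0 : 'I_2) + c2 *: 'X_(1 : 'I_2).

Lemma ev_affine c0 c1 c2 x : ev (affine c0 c1 c2) x = c0 + c1 * x.1 + c2 * x.2.
Proof. by rewrite /ev /affine !mevalD mevalC !mevalZ !mevalXU. Qed.

Lemma Pk_affine d c0 c1 c2 : Pk d.+1 (affine c0 c1 c2).
Proof. by apply: PkD; [apply: PkD; first exact: PkC|]; apply/PkZ/PkX. Qed.

Lemma ev_comp p q0 q1 x : ev (p \mPo [tuple q0; q1]) x = ev p (ev q0 x, ev q1 x).
Proof.
by rewrite /ev comp_mpoly_meval; apply: meval_eq => -[[|[|//]] ?]; rewrite (tnth_nth 0).
Qed.

Lemma Pk_comp d p q0 q1 :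
  Pk 1 q0 -> Pk 1 q1 -> Pk d p -> Pk d (p \mPo [tuple q0; q1]).
Proof.
move=> Pq0 Pq1 Pp; rewrite comp_mpolyE big_seq; apply: Pk_sum => m m_supp.
apply/PkZ/(Pk_mono (d := 1 * m 0 + 1 * m 1)).
  by rewrite !mul1n -mdeg2 -ltnS (leq_trans (msize_mdeg_lt m_supp) Pp).
by rewrite -/(mmap1 _ m) mmap1_2; apply: PkM; apply: PkXn.
Qed.

End AffineMaps.

Section LineRestriction.
Variable R : rcfType.
Implicit Types (P D : pt R) (p : {mpoly R[2]}).

Definition line_coord P D (i : 'I_2) : {poly R} := (coords P i)%:P + coords D i *: 'X.

Definition restrict_line P D p : {poly R} := mmap (@polyC R) (line_coord P D) p.

Lemma horner_restrict_line P D p t :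
  (restrict_line P D p).[t] = ev p (addp P (scalep t D)).
Proof.
rewrite /restrict_line /mmap /ev mevalE horner_sum; apply: eq_bigr => m _.
rewrite hornerCM /mmap1 horner_prod; congr (_ * _); apply: eq_bigr => i _.
rewrite horner_exp hornerD hornerC hornerZ hornerX /coords.
by case: ifP => _ /=; rewrite mulrC.
Qed.

Lemma size_restrict_line P D p : (size (restrict_line P D p) <= msize p)%N.
Proof.
rewrite /restrict_line /mmap; apply: leq_trans (size_sum _ _ _) _.
apply/bigmax_leqP_seq => m m_supp _; rewrite mul_polyC.
apply: leq_trans (size_scale_leq _ _) (leq_trans _ (msize_mdeg_lt m_supp)).
rewrite /mmap1 mdegE; elim/big_rec2: _ => [|i q s _ IHq]; first by rewrite size_poly1.
have size_coord : (size (line_coord P D i) <= 2)%N.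
  rewrite (leq_trans (size_polyD _ _)) // geq_max (leq_trans (size_polyC_leq1 _)) //.
  by rewrite (leq_trans (size_scale_leq _ _)) ?size_polyX.
have size_pow : (size (line_coord P D i ^+ m i) <= (m i).+1)%N.
  apply: leq_trans (size_poly_exp_leq _ _) _; rewrite ltnS.
  by case: (size _) size_coord => [|[|[|//]]] _; rewrite /= ?mul0n ?mul1n.
apply: leq_trans (size_polyMleq _ _) _.
by rewrite -subn1 leq_subLR add1n -addnS -addSn leq_add.
Qed.

Lemma deriv_restrict_line P D p : (restrict_line P D p)^`() =
  D.1 *: restrict_line P D (dx p) + D.2 *: restrict_line P D (dy p).
Proof.
rewrite /restrict_line /dx /dy; elim/mpolyind: p => [|c m p _ _ IHp].
  by rewrite !mderiv0 !mmap0 deriv0 !scaler0 addr0.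
rewrite !mderivD !mmapD derivD IHp !mderivZ !mmapZ !mderivX !mmapZ !mmapX !mmap1_2.
rewrite !mnmBE !mnm1E /= !subn0 !subn1 derivM derivC mul0r add0r derivM !deriv_exp.
rewrite /line_coord /coords /= !derivD !derivC !derivZ derivX !add0r !alg_polyC.
by rewrite -!mul_polyC !rmorph_nat; ring.
Qed.

End LineRestriction.

Section PointScaling.
Variable R : rcfType.
Implicit Types (V : pt R).

Lemma scalepA a b V : scalep a (scalep b V) = scalep (a * b) V.
Proof. by rewrite /scalep /= !mulrA. Qed.

Lemma scalep_suml (I : Type) (r : seq I) (c : I -> R) V :
  \sum_(i <- r) scalep (c i) V = scalep (\sum_(i <- r) c i) V.
Proof.
rewrite [LHS]surjective_pairing (raddf_sum (@fst _ _)) (raddf_sum (@snd _ _)).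
by rewrite /scalep /= !mulr_suml.
Qed.

Lemma scalep_eq0 a V : scalep a V = 0 -> V != 0 -> a = 0.
Proof.
case: V => v1 v2 [/eqP + /eqP]; rewrite !mulf_eq0.
by case: eqP => // _ /= /eqP -> /eqP ->; rewrite eqxx.
Qed.

End PointScaling.

Section EdgewiseDimension.
Variables (R : rcfType) (E I : finType) (T : Type).
Variables (D : E * T -> Prop) (S : (E * T -> pt R) -> Prop).
Variables (edge : E -> R -> T) (v : E -> pt R).
Variables (f : I -> E * T -> pt R) (B : I -> E -> {poly R}).

Hypothesis D_edge : forall i x, D (i, x) <-> exists2 t, 0 <= t <= 1 & x = edge i t.
Hypothesis v_neq0 : forall i, v i != 0.
Hypothesis f_in_S : forall b, S (f b).
Hypothesis f_edge : forall b i t, 0 <= t <= 1 ->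
  f b (i, edge i t) = scalep (B b i).[t] (v i).
Hypothesis S_span : forall g, S g -> exists c : I -> R, forall i t, 0 <= t <= 1 ->
  g (i, edge i t) = scalep (\sum_b c b *: B b i).[t] (v i).
Hypothesis B_free : forall c : I -> R,
  (forall i, \sum_b c b *: B b i = 0) -> forall b, c b = 0.

Lemma combination_f_edge (c : I -> R) i t : 0 <= t <= 1 ->
  \sum_b scalep (c b) (f b (i, edge i t)) = scalep (\sum_b c b *: B b i).[t] (v i).
Proof.
move=> t01; under eq_bigr => b _ do rewrite f_edge // scalepA.
by rewrite scalep_suml horner_sum; under [in RHS]eq_bigr => b _ do rewrite hornerZ.
Qed.

Lemma sum_enum_val (V : nmodType) (F : I -> V) :
  \sum_(j < #|I|) F (enum_val j) = \sum_b F b.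
Proof. by rewrite -(big_enum_val (A := I)). Qed.

Lemma has_dim_edgewise : has_dim D S #|I|.
Proof.
exists (fun j => f (enum_val j)); split; [by move=> j; apply: f_in_S | split].
- move=> c comb0 j; rewrite -(enum_valK j).
  apply: (B_free (c := c \o enum_rank)) => i; apply: poly_eq0_on01 => t t01.
  apply/(@scalep_eq0 _ _ (v i)) => //; rewrite -combination_f_edge // -sum_enum_val.
  under eq_bigr => j' _ do rewrite /= enum_valK.
  by apply/comb0/D_edge; exists t.
- move=> g /S_span [c g_edge]; exists (c \o enum_val) => -[i x] Dix.
  have [t t01 ->] := (D_edge i x).1 Dix.
  by rewrite g_edge // -combination_f_edge // -sum_enum_val.
Qed.

End EdgewiseDimension.

Section PlaneVectors.
Variable R : rcfType.
Implicit Types (d w : pt R).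

Lemma ncross_sE (n : pt R) (p : R) : ncross_s n p = scalep p (n.2, - n.1).
Proof. by rewrite /ncross_s /scalep /= mulrN !(mulrC p). Qed.

Lemma dotp_self_eq0 d : (dotp d d == 0) = (d == 0).
Proof.
case: d => d1 d2; rewrite /dotp /= -!expr2 paddr_eq0 ?sqr_ge0 // !sqrf_eq0.
by rewrite xpair_eqE.
Qed.

Lemma ntan_rot c d w : c * c * dotp d d = 1 ->
  ntan (scalep c (d.2, - d.1)) w = scalep (dotp w d / dotp d d) d.
Proof.
move=> unit_n; have dd_neq0 : dotp d d != 0.
  by apply: contra_eq_neq unit_n => ->; rewrite mulr0 eq_sym oner_neq0.
have -> : (dotp d d)^-1 = c * c by apply: (mulIf dd_neq0); rewrite mulVf.
move: unit_n; case: d w {dd_neq0} => d1 d2 [w1 w2]; rewrite /ntan /dotp /scalep /=.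
move=> unit_n; have mul_unit x : x = x * (c * c * (d1 * d1 + d2 * d2)) by rewrite unit_n mulr1.
by congr pair; [rewrite {1}(mul_unit w1) | rewrite {1}(mul_unit w2)]; ring.
Qed.

End PlaneVectors.

Section Parallelogram.
Variables (R : rcfType) (a e1 e2 : pt R).
Hypothesis det_neq0 : det2 e1 e2 != 0.
Implicit Types (p : {mpoly R[2]}) (i : 'I_4) (s t u : R).

Definition pgram_pt s u : pt R :=
  (a.1 + s * e1.1 + u * e2.1, a.2 + s * e1.2 + u * e2.2).

Definition coord_s : {mpoly R[2]} := affine ((a.2 * e2.1 - a.1 * e2.2) / det2 e1 e2)
  (e2.2 / det2 e1 e2) (- e2.1 / det2 e1 e2).
Definition coord_u : {mpoly R[2]} := affine ((a.1 * e1.2 - a.2 * e1.1) / det2 e1 e2)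
  (- e1.2 / det2 e1 e2) (e1.1 / det2 e1 e2).

Lemma ev_coord_s s u : ev coord_s (pgram_pt s u) = s.
Proof. by rewrite ev_affine /=; move: det_neq0; rewrite /det2 => ?; field. Qed.

Lemma ev_coord_u s u : ev coord_u (pgram_pt s u) = u.
Proof. by rewrite ev_affine /=; move: det_neq0; rewrite /det2 => ?; field. Qed.

Definition square_edge i t : R * R :=
  match val i with 0 => (t, 0) | 1 => (1, t) | 2 => (t, 1) | _ => (0, t) end.

Definition edge_pt i t := pgram_pt (square_edge i t).1 (square_edge i t).2.

Definition edge_vec i : pt R := if odd i then e2 else e1.

Lemma edge_ptE i t : edge_pt i t = addp (edge_pt i 0) (scalep t (edge_vec i)).
Proof.
rewrite /edge_pt /pgram_pt /edge_vec /square_edge /addp /scalep.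
by case: i => -[|[|[|[|//]]]] ? /=; congr pair; ring.
Qed.

Definition orient i t := if (i < 2)%N then t else 1 - t.

Lemma orientK i : involutive (orient i).
Proof. by move=> t; rewrite /orient; case: (i < 2)%N => //; apply: subKr. Qed.

Lemma orient01 i t : (0 <= orient i t <= 1) = (0 <= t <= 1).
Proof.
rewrite /orient; case: ifP => // _.
by rewrite subr_ge0 lerBlDr lerDl andbC.
Qed.

Lemma edge_start_dirE i t : addp (edge_start a e1 e2 i) (scalep t (edge_dir e1 e2 i)) =
  edge_pt i (orient i t).
Proof.
rewrite /edge_start /edge_dir /edge_pt /pgram_pt /square_edge /orient /addp /scalep.
by case: i => -[|[|[|[|//]]]] ? /=; congr pair; ring.
Qed.

Lemma on_edgeP i x : on_edge a e1 e2 i x <-> exists2 t, 0 <= t <= 1 & x = edge_pt i t.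
Proof.
rewrite /on_edge; split=> [[t [t01 ->]]|[t t01 ->]].
  by exists (orient i t); rewrite ?orient01 ?edge_start_dirE.
by exists (orient i t); rewrite orient01 edge_start_dirE orientK.
Qed.

Definition edge_coord i : {mpoly R[2]} := if odd i then coord_u else coord_s.

Lemma ev_edge_coord i t : ev (edge_coord i) (edge_pt i t) = t.
Proof.
by rewrite /edge_coord /edge_pt /square_edge; case: i => -[|[|[|[|//]]]] ? /=;
  rewrite ?ev_coord_s ?ev_coord_u.
Qed.

Definition edge_trace i p : {poly R} := restrict_line (edge_pt i 0) (edge_vec i) p.

Lemma horner_edge_trace i p t : (edge_trace i p).[t] = ev p (edge_pt i t).
Proof. by rewrite horner_restrict_line -edge_ptE. Qed.

Lemma normal_edge_vec i : exists2 c, c * c * dotp (edge_vec i) (edge_vec i) = 1 &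
  normal e1 e2 i = scalep c ((edge_vec i).2, - (edge_vec i).1).
Proof.
have [sgn sgn2 dirE] : exists2 sgn : R, sgn * sgn = 1 &
    edge_dir e1 e2 i = scalep sgn (edge_vec i).
  rewrite /edge_dir /edge_vec /oppp /scalep.
  case: i => -[|[|[|[|//]]]] ? /=; [exists 1|exists 1|exists (-1)|exists (-1)];
    by rewrite ?mulrNN ?mul1r ?mulN1r -?surjective_pairing.
have v_neq0 : edge_vec i != 0.
  rewrite /edge_vec; case: ifP => _; apply: contra_neq det_neq0 => ->;
  by rewrite /det2 /= !(mul0r, mulr0) subrr.
rewrite /normal dirE; set c := _ / _.
have dd_ge0 : 0 <= dotp (edge_vec i) (edge_vec i).
  by rewrite /dotp -!expr2 addr_ge0 ?sqr_ge0.
have dd_neq0 : dotp (edge_vec i) (edge_vec i) != 0 by rewrite dotp_self_eq0.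
exists (c * sgn); last by rewrite /scalep /= !mulrN !mulrA.
have -> : c * sgn * (c * sgn) = c ^+ 2 by rewrite mulrACA sgn2 mulr1.
have dd_dir : dotp (scalep sgn (edge_vec i)) (scalep sgn (edge_vec i)) =
    dotp (edge_vec i) (edge_vec i).
  by rewrite /dotp /scalep /= mulrACA sgn2 mul1r mulrACA sgn2 mul1r.
by rewrite /c expr_div_n sqr_sg det_neq0 mul1r dd_dir sqr_sqrtr // mulVf.
Qed.

Definition normal_perp i : pt R := ((normal e1 e2 i).2, - (normal e1 e2 i).1).

Lemma normal_perp_neq0 i : normal_perp i != 0.
Proof.
have [c unit_c nE] := normal_edge_vec i.
rewrite -dotp_self_eq0 (_ : dotp _ _ = 1) ?oner_neq0 // -unit_c /normal_perp nE.
by rewrite /dotp /scalep /=; ring.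
Qed.

Definition edge_tangent i : pt R :=
  scalep (dotp (edge_vec i) (edge_vec i))^-1 (edge_vec i).

Lemma edge_tangent_neq0 i : edge_tangent i != 0.
Proof.
have [c unit_c _] := normal_edge_vec i.
have dd_neq0 : dotp (edge_vec i) (edge_vec i) != 0.
  by apply: contra_eq_neq unit_c => ->; rewrite mulr0 eq_sym oner_neq0.
apply: contra_neq (invr_neq0 dd_neq0) => /scalep_eq0; apply.
by rewrite -dotp_self_eq0.
Qed.

Lemma ntan_normal_grad i p t :
  ntan (normal e1 e2 i) (ev (dx p) (edge_pt i t), ev (dy p) (edge_pt i t)) =
  scalep (edge_trace i p)^`().[t] (edge_tangent i).
Proof.
have [c unit_c ->] := normal_edge_vec i.
rewrite ntan_rot // deriv_restrict_line hornerD !hornerZ !horner_restrict_line.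
by rewrite -edge_ptE /edge_tangent scalepA /dotp /=; congr scalep; ring.
Qed.

End Parallelogram.

Section SquareTraces.
Variable R : rcfType.
Implicit Types (p q n : nat) (i : 'I_4).

Definition square_trace p q i : {poly R} :=
  match val i with
  | 0 => (q == 0)%:R *: 'X^p
  | 1 => 'X^q
  | 2 => 'X^p
  | _ => (p == 0)%:R *: 'X^q
  end.

Lemma horner_square_trace p q i (t : R) :
  (square_trace p q i).[t] = (square_edge i t).1 ^+ p * (square_edge i t).2 ^+ q.
Proof.
rewrite /square_trace /square_edge; case: i => -[|[|[|[|//]]]] ? /=;
  by rewrite ?hornerZ hornerXn ?expr1n ?mulr1 ?mul1r // expr0n mulrC.
Qed.

Definition square_coef p q n (i : nat) : R :=
  match i with
  | 0 => ((q == 0) && (n == p))%:R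
  | 1 => (n == q)%:R
  | 2 => (n == p)%:R
  | _ => ((p == 0) && (n == q))%:R
  end.

Lemma coef_square_trace p q n i : (square_trace p q i)`_n = square_coef p q n i.
Proof.
by rewrite /square_trace; case: i => -[|[|[|[|//]]]] ? /=; rewrite ?coefZ coefXn // -natrM mulnb.
Qed.

Lemma square_trace_split p q i : (0 < p)%N -> (0 < q)%N ->
  square_trace p q i = square_trace p 1 i + square_trace 1 q i - square_trace 1 1 i.
Proof.
case: p q => [|p] [|q] // _ _; rewrite /square_trace.
by case: i => -[|[|[|[|//]]]] ? /=; rewrite ?scale0r ?subr0 ?addr0 ?addrK // addrC addKr.
Qed.

End SquareTraces.

Section WBasis.
Variables (R : rcfType) (k : nat).

Definition windex := (('I_k.+1 + 'I_k.+1) + (('I_k.-1 + 'I_k.-1) + 'I_1))%type.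

(* The exponents (p, q) with 1 <= p + q <= k + 1 and min(p, q) <= 1. *)
Definition wexp (b : windex) : nat * nat :=
  match b with
  | inl (inl j) => (j.+1, 0)
  | inl (inr j) => (0, j.+1)
  | inr (inl (inl j)) => (j.+2, 1)
  | inr (inl (inr j)) => (1, j.+2)
  | inr (inr _) => (1, 1)
  end.

Definition wbasis (b : windex) (i : 'I_4) : {poly R} :=
  (square_trace R (wexp b).1 (wexp b).2 i)^`().

Definition in_wspan (Q : 'I_4 -> {poly R}) :=
  exists c : windex -> R, forall i, \sum_b c b *: wbasis b i = Q i.

Lemma in_wspan_ext Q Q' : in_wspan Q -> (forall i, Q i = Q' i) -> in_wspan Q'.
Proof. by move=> [c cQ] QQ'; exists c => i; rewrite cQ QQ'. Qed.

Lemma in_wspan0 : in_wspan (fun _ => 0).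
Proof. by exists (fun _ => 0) => i; apply: big1 => b _; rewrite scale0r. Qed.

Lemma in_wspanD Q Q' : in_wspan Q -> in_wspan Q' -> in_wspan (fun i => Q i + Q' i).
Proof.
move=> [c cQ] [c' cQ']; exists (fun b => c b + c' b) => i.
by rewrite -cQ -cQ' -big_split; apply: eq_bigr => b _; rewrite scalerDl.
Qed.

Lemma in_wspanZ x Q : in_wspan Q -> in_wspan (fun i => x *: Q i).
Proof.
move=> [c cQ]; exists (fun b => x * c b) => i.
by rewrite -cQ scaler_sumr; apply: eq_bigr => b _; rewrite scalerA.
Qed.

Lemma in_wspan_sum (T : eqType) (r : seq T) (F : T -> 'I_4 -> {poly R}) :
  (forall m, m \in r -> in_wspan (F m)) -> in_wspan (fun i => \sum_(m <- r) F m i).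
Proof.
elim: r => [|m r IHr] spanF; first by apply: (in_wspan_ext in_wspan0) => i; rewrite big_nil.
apply: (in_wspan_ext (in_wspanD (spanF m (mem_head _ _)) (IHr _))) => [m' m'_r|i].
  by apply: spanF; rewrite in_cons m'_r orbT.
by rewrite big_cons.
Qed.

Lemma in_wspan_basis b : in_wspan (wbasis b).
Proof.
exists (fun b' => (b' == b)%:R) => i.
by rewrite (bigD1 b) //= eqxx scale1r big1 ?addr0 // => b' /negbTE ->; rewrite scale0r.
Qed.

Lemma in_wspan_dtrace_low p q : (0 < p + q <= k.+1)%N -> (minn p q <= 1)%N ->
  in_wspan (fun i => (square_trace R p q i)^`()).
Proof.
case: p q => [|[|p]] [|[|q]] //= bound min1.
- exact: (in_wspan_basis (inl (inr (@Ordinal _ 0 _)))).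
- by apply: (in_wspan_basis (inl (inr (@Ordinal _ q.+1 _)))); lia.
- exact: (in_wspan_basis (inl (inl (@Ordinal _ 0 _)))).
- exact: (in_wspan_basis (inr (inr ord0))).
- by apply: (in_wspan_basis (inr (inl (inr (@Ordinal _ q _))))); lia.
- by apply: (in_wspan_basis (inl (inl (@Ordinal _ p.+1 _)))); lia.
- by apply: (in_wspan_basis (inr (inl (inl (@Ordinal _ p _))))); lia.
- by rewrite !minnSS in min1.
Qed.

Lemma in_wspan_dtrace p q : (p + q <= k.+1)%N ->
  in_wspan (fun i => (square_trace R p q i)^`()).
Proof.
move=> le_pq; have [pq0|pq_gt0] := posnP (p + q).
  move: pq0 => /eqP; rewrite addn_eq0 => /andP[/eqP-> /eqP->].
  apply: (in_wspan_ext in_wspan0) => i; rewrite /square_trace.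
  by case: i => -[|[|[|[|//]]]] ? /=; rewrite ?derivZ derivXn mulr0n ?scaler0.
have [min1|] := leqP (minn p q) 1; first by apply: in_wspan_dtrace_low => //; lia.
rewrite leq_min => /andP[p_gt1 q_gt1].
have low := @in_wspan_dtrace_low.
apply: (in_wspan_ext (in_wspanD (in_wspanD (low p 1 _ _) (low 1 q _ _))
  (in_wspanZ (-1) (low 1 1 _ _)))); try lia.
move=> i; rewrite (square_trace_split R i (ltnW p_gt1) (ltnW q_gt1)).
by rewrite derivB derivD scaleN1r.
Qed.

Lemma sum_windex (F : windex -> R) : \sum_b F b =
  \sum_j F (inl (inl j)) + \sum_j F (inl (inr j)) +
  (\sum_j F (inr (inl (inl j))) + \sum_j F (inr (inl (inr j))) + F (inr (inr ord0))).
Proof. by rewrite !big_sumType big_ord1. Qed.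

Lemma sum_delta n (F : 'I_n -> R) (j : 'I_n) : \sum_i F i * (j == i :> nat)%:R = F j.
Proof.
rewrite (bigD1 j) //= eqxx mulr1 big1 ?addr0 // => i /negbTE.
by rewrite -val_eqE eq_sym => ->; rewrite mulr0.
Qed.

Lemma wbasis_free (c : windex -> R) :
  (forall i, \sum_b c b *: wbasis b i = 0) -> forall b, c b = 0.
Proof.
move=> c0.
have coef_eq0 (i : 'I_4) l : \sum_b c b * square_coef R (wexp b).1 (wexp b).2 l.+1 i = 0.
  apply/eqP; rewrite -[_ == 0]orFb -[false]/(l.+1 == 0)%N -mulrn_eq0 -sumrMnl.
  have := congr1 (fun Q : {poly R} => Q`_l) (c0 i); rewrite /= coef_sum coef0 => sum0.
  rewrite -[X in _ == X]sum0; apply/eqP; apply: eq_bigr => b _.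
  by rewrite coefZ coef_deriv mulrnAr coef_square_trace.
have edge_coef (i : nat) (lt_i4 : (i < 4)%N) l := coef_eq0 (Ordinal lt_i4) l.
(* The system is triangular: the five families of coefficients are read off,
   in turn, on edges 0, 3, 2, 1 and from the linear term on edge 1. *)
have cA j : c (inl (inl j)) = 0.
  have := edge_coef 0 isT j; rewrite sum_windex /= -!big_distrl /= !mulr0 !addr0.
  by under eq_bigr do rewrite eqSS; rewrite sum_delta.
have cB j : c (inl (inr j)) = 0.
  have := edge_coef 3 isT j; rewrite sum_windex /= -!big_distrl /= !mulr0 !addr0 add0r.
  by under eq_bigr do rewrite eqSS; rewrite sum_delta.
have cC j : c (inr (inl (inl j))) = 0.
  have := edge_coef 2 isT j.+1; rewrite sum_windex /= -!big_distrl /= !mulr0 !addr0.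
  under eq_bigr do rewrite cA mul0r; rewrite big1_eq add0r.
  by under eq_bigr do rewrite !eqSS; rewrite sum_delta.
have cD j : c (inr (inl (inr j))) = 0.
  have := edge_coef 1 isT j.+1; rewrite sum_windex /= -!big_distrl /= !mulr0 !add0r.
  under eq_bigr do rewrite cB mul0r; rewrite big1_eq add0r addr0.
  by under eq_bigr do rewrite !eqSS; rewrite sum_delta.
have := edge_coef 1 isT 0; rewrite sum_windex /= -!big_distrl /= !mulr0 mulr1 add0r.
under eq_bigr do rewrite cB mul0r; rewrite big1_eq add0r.
under eq_bigr do rewrite cC; rewrite big1_eq !add0r mulr1 => cE.
by case=> [[j|j]|[[j|j]|j]]; rewrite ?cA ?cB ?cC ?cD // (ord1 j).
Qed.

End WBasis.

Lemma poly_coefsK (R : nzRingType) n (q : {poly R}) :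
  (size q <= n)%N -> \poly_(j < n) q`_j = q.
Proof.
move=> size_q; apply/polyP => j; rewrite coef_poly.
by case: ltnP => // /(leq_trans size_q) /leq_sizeP ->.
Qed.

Section Traces.
Variables (R : rcfType) (a e1 e2 : pt R) (k : nat).
Hypothesis det_neq0 : det2 e1 e2 != 0.

Lemma has_dim_Vtrace : has_dim (bdom a e1 e2) (Vtrace k a e1 e2) 1.
Proof.
rewrite -[X in has_dim _ _ X](card_ord 1).
apply: (has_dim_edgewise (edge := edge_pt a e1 e2) (v := normal_perp e1 e2)
  (f := fun _ ix => ncross_s (normal e1 e2 ix.1) 1) (B := fun _ _ => 1)).
- exact: on_edgeP.
- exact: normal_perp_neq0.
- move=> _; exists 1; split; first by rewrite /Pk msize1.
  split; first by rewrite /curl_s_zero /dx /dy -mpolyC1 !mderivC oppr0.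
  by move=> i x _; rewrite /ev meval1.
- by move=> _ i t _; rewrite hornerC ncross_sE.
- move=> g [v [_ [/curl_s_zero_const v_const g_edge]]].
  exists (fun _ => v@_0) => i t t01; rewrite g_edge; last by apply/on_edgeP; exists t.
  by rewrite big_ord1 ncross_sE {1}v_const /ev mevalC hornerZ hornerC mulr1.
- move=> c /(_ ord0); rewrite big_ord1 alg_polyC => /eqP; rewrite polyC_eq0 => /eqP c0 b.
  by rewrite (ord1 b).
Qed.

Lemma sum_edge_monomials (c : 'I_4 * 'I_k.+1 -> R) i :
  \sum_b c b *: ((i == b.1)%:R *: 'X^(b.2)) = \poly_(j < k.+1) c (i, inord j).
Proof.
transitivity (\sum_i0 \sum_(j < k.+1) c (i0, j) *: ((i == i0)%:R *: 'X^j)).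
  by rewrite pair_bigA; apply: eq_bigr => -[].
rewrite (bigD1 i) //= [X in _ + X]big1 => [|i0 i0_neq_i]; last first.
  by apply: big1 => j _; rewrite eq_sym (negbTE i0_neq_i) scale0r scaler0.
by rewrite eqxx addr0 poly_def; apply: eq_bigr => j _; rewrite scale1r inord_val.
Qed.

Lemma has_dim_Mspace : has_dim (bdom a e1 e2) (Mspace k a e1 e2) (4 * k.+1).
Proof.
have -> : (4 * k.+1)%N = #|{: 'I_4 * 'I_k.+1}| by rewrite card_prod !card_ord.
pose P (b : 'I_4 * 'I_k.+1) i := (i == b.1)%:R *: edge_coord a e1 e2 i ^+ b.2.
apply: (has_dim_edgewise (edge := edge_pt a e1 e2) (v := normal_perp e1 e2)
  (f := fun b ix => ncross_s (normal e1 e2 ix.1) (ev (P b ix.1) ix.2))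
  (B := fun b i => (i == b.1)%:R *: 'X^(b.2))).
- exact: on_edgeP.
- exact: normal_perp_neq0.
- move=> b i; exists (P b i); split => //.
  apply/PkZ/(Pk_mono (d := 1 * b.2)); first by rewrite mul1n -ltnS.
  by apply/PkXn; rewrite /edge_coord; case: odd; apply: Pk_affine.
- move=> b i t _; rewrite ncross_sE /P /ev mevalZ rmorphXn /= -/(ev _ _).
  by rewrite ev_edge_coord // hornerZ hornerXn.
- move=> g g_M; have [p Pp] := fin_all_exists g_M.
  exists (fun b : 'I_4 * 'I_k.+1 => (edge_trace a e1 e2 b.1 (p b.1))`_b.2) => i t t01.
  rewrite sum_edge_monomials; under eq_poly => j lt_jk do rewrite /= inordK //.
  rewrite poly_coefsK; last first.
    exact: leq_trans (size_restrict_line _ _ _) (proj1 (Pp i)).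
  rewrite (proj2 (Pp i)) ?horner_edge_trace ?ncross_sE //.
  by apply/on_edgeP; exists t.
- move=> c c0 [i j]; have := congr1 (fun q : {poly R} => q`_j) (c0 i).
  by rewrite /= sum_edge_monomials coef_poly ltn_ord inord_val coef0.
Qed.

Lemma in_wspan_edge_trace phi : Pk k.+1 phi ->
  in_wspan k (fun i => (edge_trace a e1 e2 i phi)^`()).
Proof.
move=> Pphi; pose psi := phi \mPo [tuple affine a.1 e1.1 e2.1; affine a.2 e1.2 e2.2].
have Ppsi : Pk k.+1 psi by apply: Pk_comp => //; apply: Pk_affine.
have traceE i : edge_trace a e1 e2 i phi =
    \sum_(m <- msupp psi) psi@_m *: square_trace R (m 0) (m 1) i.
  apply: poly_eq_on01 => t _; rewrite horner_edge_trace horner_sum.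
  have -> : ev phi (edge_pt a e1 e2 i t) = ev psi (square_edge i t).
    by rewrite ev_comp !ev_affine /edge_pt /pgram_pt; congr (ev _ (_, _)); ring.
  rewrite /ev mevalE; apply: eq_bigr => m _.
  by rewrite hornerZ horner_square_trace -/(mmap1 _ m) mmap1_2.
apply: (in_wspan_ext (in_wspan_sum (r := msupp psi)
  (F := fun m i => psi@_m *: (square_trace R (m 0) (m 1) i)^`()) _)).
  move=> m m_supp; apply: in_wspanZ; apply: in_wspan_dtrace.
  by rewrite -mdeg2 -ltnS (leq_trans (msize_mdeg_lt m_supp) Ppsi).
by move=> i; rewrite traceE raddf_sum; apply: eq_bigr => m _ /=; rewrite derivZ.
Qed.

Lemma edge_trace_monomial p q i :
  edge_trace a e1 e2 i (coord_s a e1 e2 ^+ p * coord_u a e1 e2 ^+ q) = square_trace R p q i.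
Proof.
apply: poly_eq_on01 => t _; rewrite horner_edge_trace horner_square_trace.
by rewrite /ev rmorphM !rmorphXn /= -!/(ev _ _) ev_coord_s ?ev_coord_u.
Qed.

Lemma card_windex : (0 < k)%N -> #|{: windex k}| = (4 * k + 1)%N.
Proof. by rewrite !card_sum !card_ord; lia. Qed.

Lemma has_dim_Wtrace : (0 < k)%N ->
  has_dim (bdom a e1 e2) (Wtrace k a e1 e2) (4 * k + 1).
Proof.
move=> k_gt0; rewrite -card_windex //.
pose phi (b : windex k) := coord_s a e1 e2 ^+ (wexp b).1 * coord_u a e1 e2 ^+ (wexp b).2.
apply: (has_dim_edgewise (edge := edge_pt a e1 e2) (v := edge_tangent e1 e2)
  (f := fun b ix => ntan (normal e1 e2 ix.1) (ev (dx (phi b)) ix.2, ev (dy (phi b)) ix.2))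
  (B := @wbasis R k)).
- exact: on_edgeP.
- exact: edge_tangent_neq0.
- move=> b; exists (dx (phi b)), (dy (phi b)).
  have Pphi : Pk k.+1 (phi b).
    apply: (Pk_mono (d := 1 * (wexp b).1 + 1 * (wexp b).2)).
      by case: b => [[j|j]|[[j|j]|j]] /=; have := ltn_ord j; lia.
    by apply: PkM; apply: PkXn; apply: Pk_affine.
  split; [exact: Pk_mderiv | split; [exact: Pk_mderiv | split => //]].
  by rewrite /curl_v /dx /dy mderiv_comm addNr.
- by move=> b i t _; rewrite /= ntan_normal_grad // edge_trace_monomial.
- move=> g [w1 [w2 [Pw1 [Pw2 [curl0 g_edge]]]]].
  have curl_w : dx w2 = dy w1.
    by apply/eqP; rewrite -subr_eq0 addrC; apply/eqP.
  have [psi [Ppsi dx_psi dy_psi]] := Pk_curl_free_grad Pw1 Pw2 curl_w.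
  have [c span_c] := in_wspan_edge_trace Ppsi.
  exists c => i t t01; rewrite g_edge; last by apply/on_edgeP; exists t.
  by rewrite -dx_psi -dy_psi ntan_normal_grad // span_c.
- exact: wbasis_free.
Qed.

End Traces.

Theorem lemma5p5 (R : rcfType) (a e1 e2 : pt R) (k : nat) :
  det2 e1 e2 != 0 -> (1 <= k)%N ->
  exists dM dV dW : nat,
    has_dim (bdom a e1 e2) (Mspace k a e1 e2) dM /\
    has_dim (bdom a e1 e2) (Vtrace k a e1 e2) dV /\
    has_dim (bdom a e1 e2) (Wtrace k a e1 e2) dW /\
    (dM%:Z - dV%:Z - dW%:Z = 2)%R.
Proof.
move=> det_neq0 k_gt0; exists (4 * k.+1)%N, 1%N, (4 * k + 1)%N.
split; first exact: has_dim_Mspace.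
split; first exact: has_dim_Vtrace.
split; first exact: has_dim_Wtrace.
lia.
Qed.
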